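(* Let $f\in\mathbb{R}[x,y]$ be a polynomial of degree $n\ge 3$ and let $p$ be a point of the equator $\{\omega=0\}$ of $\mathbb{S}^2$. Then $p$ is a flat point of the quadratic form $Q$ if and only if $p$ is a singular point at infinity of $\mathbb{Y}_k$, $k=1,2$. Moreover, if $p=(u_0,v_0,0)$ is a singular point at infinity of $\mathbb{Y}_k$ and $f_n$ has no repeated factors, then $H_f(u_0,v_0,0)<0$.
   Context: Write $f=\sum_{i=0}^n f_i$ with $f_i$ homogeneous of degree $i$, $F(u,v,\omega)=\sum_{i=0}^n\omega^{n-i}f_i(u,v)$, $A=-uF_{uu}-vF_{uv}$, $B=-uF_{uv}-vF_{vv}$, $S=u^2F_{uu}+2uvF_{uv}+v^2F_{vv}$, and let $Q=\omega^2F_{uu}du^2+2\omega^2F_{uv}du\,dv+\omega^2F_{vv}dv^2+2\omega A\,du\,d\omega+2\omega B\,dv\,d\omega+S\,d\omega^2$, restricted to the unit sphere $\mathbb{S}^2\subset\mathbb{R}^3=\{(u,v,\omega)\}$; on each open hemisphere it is a nonvanishing multiple of the form induced from $\mathrm{II}_f=f_{xx}dx^2+2f_{xy}dxdy+f_{yy}dy^2$ via $(u,v,\omega)\mapsto(u/\omega,v/\omega)$. $\mathbb{Y}_1,\mathbb{Y}_2$ are the two fields of lines on $\mathbb{S}^2$ given by the solutions $\xi\in T_p\mathbb{S}^2$ of $Q_p(\xi,\xi)=0$. A flat point of $Q$ is a point where all coefficients $\omega^2F_{uu},\omega^2F_{uv},\omega^2F_{vv},\omega A,\omega B,S$ vanish.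 A singular point of $\mathbb{Y}_k$ is a point $p$ at which the restriction of $Q_p$ to $T_p\mathbb{S}^2$ vanishes identically (so the line fields are not determined there); a singular point at infinity is a singular point lying on the equator. $H_f$ is the homogenization $z^{2n-4}\mathrm{Hess}\,f(x/z,y/z)$ of $\mathrm{Hess}\,f=f_{xx}f_{yy}-f_{xy}^2$, so $H_f(x,y,0)=\mathrm{Hess}\,f_n(x,y)$. *)

From HB Require Import structures.
From mathcomp Require Import all_boot all_order all_algebra.
From mathcomp Require Import mpoly.
Set Implicit Arguments. Unset Strict Implicit. Unset Printing Implicit Defensive.
Import Order.TTheory GRing.Theory Num.Theory.
Local Open Scope ring_scope.

Section Defs.
Variable R : rcfType.

Definition ix : 'I_2 := @Ordinal 2 0 isT.
Definition iy : 'I_2 := @Ordinal 2 1 isT.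
Definition iu : 'I_3 := @Ordinal 3 0 isT.
Definition iv : 'I_3 := @Ordinal 3 1 isT.
Definition iw : 'I_3 := @Ordinal 3 2 isT.

(* total degree of f (msize = 1 + total degree, 0 for the zero polynomial) *)
Definition tdeg (f : {mpoly R[2]}) : nat := (msize f).-1.

Definition hpart (i : nat) (f : {mpoly R[2]}) : {mpoly R[2]} :=
  \sum_(m <- msupp f | mdeg m == i) f@_m *: 'X_[m].

(* homogenization with respect to degree d : z^d g(x/z, y/z), variables (x,y,z) *)
Definition homogenize (d : nat) (g : {mpoly R[2]}) : {mpoly R[3]} :=
  \sum_(m <- msupp g)
     g@_m *: ('X_iu ^+ m ix * 'X_iv ^+ m iy * 'X_iw ^+ (d - mdeg m)).

(* F(u,v,w) = sum_i w^(n-i) f_i(u,v),  n = deg f *)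
Definition bigF (f : {mpoly R[2]}) : {mpoly R[3]} := homogenize (tdeg f) f.

Definition ev3 (P : {mpoly R[3]}) (u v w : R) : R :=
  P.@[fun i : 'I_3 => nth 0 [:: u; v; w] i].

Definition Fuu f := mderiv iu (mderiv iu (bigF f)).
Definition Fuv f := mderiv iu (mderiv iv (bigF f)).
Definition Fvv f := mderiv iv (mderiv iv (bigF f)).

Definition polA f : {mpoly R[3]} := - ('X_iu * Fuu f) - 'X_iv * Fuv f.
Definition polB f : {mpoly R[3]} := - ('X_iu * Fuv f) - 'X_iv * Fvv f.
Definition polS f : {mpoly R[3]} :=
  'X_iu ^+ 2 * Fuu f + 2%:R *: ('X_iu * 'X_iv * Fuv f) + 'X_iv ^+ 2 * Fvv f.

Definition Q_uu f u v w := w ^+ 2 * ev3 (Fuu f) u v w.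
Definition Q_uv f u v w := w ^+ 2 * ev3 (Fuv f) u v w.
Definition Q_vv f u v w := w ^+ 2 * ev3 (Fvv f) u v w.
Definition Q_uw f u v w := w * ev3 (polA f) u v w.
Definition Q_vw f u v w := w * ev3 (polB f) u v w.
Definition Q_ww f u v w := ev3 (polS f) u v w.

Definition Qform f u v w (a b c : R) : R :=
  Q_uu f u v w * a ^+ 2 + 2%:R * Q_uv f u v w * a * b + Q_vv f u v w * b ^+ 2
  + 2%:R * Q_uw f u v w * a * c + 2%:R * Q_vw f u v w * b * c
  + Q_ww f u v w * c ^+ 2.

Definition on_sphere (u v w : R) : Prop := u ^+ 2 + v ^+ 2 + w ^+ 2 = 1.

Definition flat_pt f u v w : Prop :=
  Q_uu f u v w = 0 /\ Q_uv f u v w = 0 /\ Q_vv f u v w = 0 /\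
  Q_uw f u v w = 0 /\ Q_vw f u v w = 0 /\ Q_ww f u v w = 0.

(* singular point of the line fields Y_1, Y_2: Q_p restricted to T_p S^2
   vanishes identically *)
Definition singular_pt f u v w : Prop :=
  on_sphere u v w /\
  forall a b c : R, a * u + b * v + c * w = 0 -> Qform f u v w a b c = 0.

Definition singular_at_infinity f u v w : Prop :=
  singular_pt f u v w /\ w = 0.

Definition hessian (f : {mpoly R[2]}) : {mpoly R[2]} :=
  mderiv ix (mderiv ix f) * mderiv iy (mderiv iy f)
  - (mderiv ix (mderiv iy f)) ^+ 2.

Definition Hf (f : {mpoly R[2]}) : {mpoly R[3]} :=
  homogenize (2 * tdeg f - 4)%N (hessian f).

Definition no_repeated_factors (g : {mpoly R[2]}) : Prop :=
  forall a b : {mpoly R[2]}, g = a * a * b -> (msize a <= 1)%N.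

End Defs.

From HB Require Import structures.
From mathcomp Require Import all_boot all_order all_algebra.
From mathcomp Require Import mpoly.
From mathcomp Require Import ring lra zify.
Set Implicit Arguments. Unset Strict Implicit. Unset Printing Implicit Defensive.
Import Order.TTheory GRing.Theory Num.Theory.
Local Open Scope ring_scope.

(* At a point p = (u, v, 0) of the equator every coefficient of Q except S
   carries a factor w, and (0, 0, 1) is tangent to the sphere at p, so being
   flat and being singular both mean S(p) = 0.  On the plane w = 0 the
   polynomial F restricts to the top-degree part g = f_n, S to
   u^2 g_xx + 2uv g_xy + v^2 g_yy and H_f to Hess g.  Euler's relation for g,
   g_x, g_y turns S(p) = 0 into g(p) = 0 and gives, on the unit circle,
   Hess g(p) = -(n-1)^2 (u g_y - v g_x)(p)^2.  If the tangential derivative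
   u g_y - v g_x also vanished at p, expanding g in the rotated coordinates
   s = ux + vy, l = vx - uy modulo l^2 would show that l^2 divides g,
   contradicting squarefreeness of f_n. *)

Section EqModSq.
Variables (T : comNzRingType) (l : T).

Definition eqmod_sq (p q : T) := exists W, p = q + l ^+ 2 * W.

Lemma eqmod_sq_refl p : eqmod_sq p p.
Proof. by exists 0; rewrite mulr0 addr0. Qed.

Lemma eqmod_sq_trans p q r : eqmod_sq p q -> eqmod_sq q r -> eqmod_sq p r.
Proof. by move=> [W1 ->] [W2 ->]; exists (W1 + W2); ring. Qed.

Lemma eqmod_sqD p p' q q' :
  eqmod_sq p p' -> eqmod_sq q q' -> eqmod_sq (p + q) (p' + q').
Proof. by move=> [W1 ->] [W2 ->]; exists (W1 + W2); ring. Qed.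

Lemma eqmod_sqM p p' q q' :
  eqmod_sq p p' -> eqmod_sq q q' -> eqmod_sq (p * q) (p' * q').
Proof.
by move=> [W1 ->] [W2 ->]; exists (p' * W2 + q' * W1 + l ^+ 2 * W1 * W2); ring.
Qed.

Lemma eqmod_sq_sum (I : Type) (s : seq I) (P : pred I) (F G : I -> T) :
  (forall i, P i -> eqmod_sq (F i) (G i)) ->
  eqmod_sq (\sum_(i <- s | P i) F i) (\sum_(i <- s | P i) G i).
Proof. exact: (big_ind2 eqmod_sq (eqmod_sq_refl 0) eqmod_sqD). Qed.

Lemma eqmod_sq_expr (a b s : T) k :
  eqmod_sq ((a * s + b * l) ^+ k)
           (a ^+ k * s ^+ k + k%:R * a ^+ k.-1 * b * s ^+ k.-1 * l).
Proof.
case: k => [|k]; first by exists 0; rewrite !expr0; ring.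
elim: k => [|k [W IH]]; first by exists 0; rewrite !expr1 !expr0; ring.
exists (k.+1%:R * a ^+ k * b ^+ 2 * s ^+ k + (a * s + b * l) * W).
by rewrite exprS IH /= !exprS; ring.
Qed.

Lemma eqmod_sq_monomial (u v s : T) a b : (0 < a + b)%N ->
  eqmod_sq ((u * s + v * l) ^+ a * (v * s - u * l) ^+ b)
    (u ^+ a * v ^+ b * s ^+ (a + b)
     + (a%:R * u ^+ a.-1 * v ^+ b.+1 - b%:R * u ^+ a.+1 * v ^+ b.-1)
       * s ^+ (a + b).-1 * l).
Proof.
move=> ab; rewrite (_ : v * s - u * l = v * s + (- u) * l); last by ring.
apply: eqmod_sq_trans (eqmod_sqM (eqmod_sq_expr _ _ _ _) (eqmod_sq_expr _ _ _ _)) _.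
exists (a%:R * u ^+ a.-1 * v * s ^+ a.-1 * (b%:R * v ^+ b.-1 * - u * s ^+ b.-1)).
case: a b ab => [|a] [|b] // _;
  rewrite /= ?add0n ?addn0 ?addSn ?addnS /= !exprS ?exprD ?expr0; ring.
Qed.

End EqModSq.

Lemma big_ord2_xy (T : Type) (idx : T) (op : Monoid.law idx) (F : 'I_2 -> T) :
  \big[op/idx]_(i < 2) F i = op (F ix) (F iy).
Proof.
rewrite !big_ord_recl big_ord0 Monoid.mulm1.
by congr (op (F _) (F _)); apply: val_inj.
Qed.

Lemma big_ord3_uvw (T : Type) (idx : T) (op : Monoid.law idx) (F : 'I_3 -> T) :
  \big[op/idx]_(i < 3) F i = op (F iu) (op (F iv) (F iw)).
Proof.
rewrite !big_ord_recl big_ord0 Monoid.mulm1.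
by congr (op (F _) (op (F _) (F _))); apply: val_inj.
Qed.

Section MPolyAux.
Variables (R : idomainType) (n : nat).
Implicit Types (p q : {mpoly R[n]}).

Lemma sum_msupp_indicator p (c : 'X_{1..n} -> R) m :
  \sum_(m' <- msupp p) p@_m' * c m' * (m' == m)%:R = p@_m * c m.
Proof.
have [mp|mNp] := boolP (m \in msupp p).
  rewrite (bigD1_seq m) ?msupp_uniq //= eqxx mulr1 big1 ?addr0 // => m' /negbTE.
  by rewrite eq_sym => ->; rewrite mulr0.
rewrite (memN_msupp_eq0 mNp) mul0r big_seq big1 // => m' m'p.
by case: eqP m'p => [->|_]; rewrite ?(negbTE mNp) ?mulr0.
Qed.

Lemma mcoeff_sum_msupp_cond (P : pred 'X_{1..n}) p m :
  (\sum_(m' <- msupp p | P m') p@_m' *: 'X_[m'])@_m = p@_m * (P m)%:R.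
Proof.
rewrite big_mkcond raddf_sum /= -(sum_msupp_indicator p (fun m => (P m)%:R)).
apply: eq_bigr => m' _.
by case: (P m'); rewrite ?mcoeffZ ?mcoeffX ?mcoeff0 ?mulr1 ?mulr0 ?mul0r.
Qed.

Lemma msize_leq_mcoeff p k :
  (forall m, p@_m != 0 -> (mdeg m < k)%N) -> (msize p <= k)%N.
Proof.
move=> lt_k; rewrite msizeE; apply/bigmax_leqP_seq => m mp _.
by apply: lt_k; rewrite -mcoeff_msupp.
Qed.

Lemma mcoeff_eq0_msize p m : (msize p <= mdeg m)%N -> p@_m = 0.
Proof. by move/msize_mdeg_ge/memN_msupp_eq0. Qed.

Lemma msize_mderiv i p : (msize (mderiv i p) <= (msize p).-1)%N.
Proof.
apply: msize_leq_mcoeff => m; rewrite mcoeff_deriv => nz.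
have : p@_(m + U_(i))%MM != 0 by apply: contraNneq nz => ->; rewrite mul0rn.
rewrite -mcoeff_msupp => /msize_mdeg_lt; rewrite mdegD mdeg1 addn1.
by case: (msize p).
Qed.

Lemma msizeD_leq p q k :
  (msize p <= k)%N -> (msize q <= k)%N -> (msize (p + q) <= k)%N.
Proof.
by move=> pk qk; apply: leq_trans (mmeasureD_le _ _ _) _; rewrite geq_max pk qk.
Qed.

Lemma msize_mderiv2 i j p k :
  (msize p <= k)%N -> (msize (mderiv i (mderiv j p)) <= k.-2)%N.
Proof.
move=> pk; have := msize_mderiv i (mderiv j p); have := msize_mderiv j p.
rewrite -!subn1 in pk *; lia.
Qed.

Lemma msizeM_leq p q a b c : (msize p <= a)%N -> (msize q <= b)%N ->
  (a + b <= c.+1)%N -> (msize (p * q) <= c)%N.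
Proof.
have [->|p0] := eqVneq p 0; first by rewrite mul0r msize0.
have [->|q0] := eqVneq q 0; first by rewrite mulr0 msize0.
rewrite msizeM // => pa qb abc; have := leq_add pa qb; rewrite -subn1; lia.
Qed.

Lemma mderiv_homog d i p : p \is d.-homog -> mderiv i p \is d.-1.-homog.
Proof.
move/dhomogP => pd; apply/dhomogP => m; rewrite mcoeff_msupp mcoeff_deriv => nz.
have : p@_(m + U_(i))%MM != 0 by apply: contraNneq nz => ->; rewrite mul0rn.
rewrite -mcoeff_msupp => /pd mdm; have : mdeg (m + U_(i))%MM = d := mdm.
by rewrite mdegD mdeg1 addn1 => <-.
Qed.

End MPolyAux.

Section Equator.
Variable R : rcfType.
Implicit Types (f h r : {mpoly R[2]}) (P : {mpoly R[3]}).

Definition pt (u v : R) : 'I_2 -> R := fun i => nth 0 [:: u; v] i.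

Lemma mdeg2 (m : 'X_{1..2}) : mdeg m = (m ix + m iy)%N.
Proof. by rewrite mdegE big_ord2_xy. Qed.

Lemma mpolyX2 (m : 'X_{1..2}) : 'X_[m] = 'X_ix ^+ m ix * 'X_iy ^+ m iy :> {mpoly R[2]}.
Proof. by rewrite mpolyXE_id big_ord2_xy. Qed.

Lemma meval_ptX u v (m : 'X_{1..2}) :
  ('X_[m] : {mpoly R[2]}).@[pt u v] = u ^+ m ix * v ^+ m iy.
Proof. by rewrite mevalX big_ord2_xy. Qed.

Definition at_w0 (P : {mpoly R[3]}) : {mpoly R[2]} := P \mPo [tuple 'X_ix; 'X_iy; 0].

Definition mnm_uv (M : 'X_{1..3}) : 'X_{1..2} :=
  [multinom (nth 0%N [:: M iu; M iv] i) | i < 2].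

Definition mnm_w0 (m : 'X_{1..2}) : 'X_{1..3} :=
  [multinom (nth 0%N [:: m ix; m iy; 0%N] i) | i < 3].

Lemma meval_at_w0 P u v : ev3 P u v 0 = (at_w0 P).@[pt u v].
Proof.
rewrite /at_w0 /ev3 comp_mpoly_meval; apply: meval_eq => -[[|[|[|i]]] Hi] //=;
  by rewrite (tnth_nth 0) /= ?mevalXU ?meval0.
Qed.

Lemma at_w0X M : at_w0 'X_[M] = (M iw == 0%N)%:R *: 'X_[mnm_uv M].
Proof.
rewrite [in RHS]mpolyX2 /at_w0 comp_mpolyX big_ord3_uvw !(tnth_nth 0) /= !mnmE /= mulrA.
by case: (M iw) => [|k]; rewrite ?expr0 ?mulr1 ?scale1r // expr0n mulr0 scale0r.
Qed.

Lemma eq_mnm_w0 M m : (M == mnm_w0 m) = (mnm_uv M == m) && (M iw == 0%N).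
Proof.
apply/eqP/andP => [->|[/eqP <- /eqP Mw0]].
  by split; rewrite ?mnmE //; apply/eqP/mnmP => -[[|[|i]] Hi]; rewrite !mnmE //=;
    congr (m _); apply: val_inj.
apply/mnmP => -[[|[|[|i]]] Hi]; rewrite !mnmE //=; [| |rewrite -[RHS]Mw0];
  by congr (M _); apply: val_inj.
Qed.

Lemma mcoeff_at_w0 P m : (at_w0 P)@_m = P@_(mnm_w0 m).
Proof.
rewrite /at_w0 comp_mpolyEX raddf_sum /= -[RHS]mulr1 -(sum_msupp_indicator P (fun=> 1)).
apply: eq_bigr => M _.
rewrite mcoeffZ -/(at_w0 _) at_w0X mcoeffZ mcoeffX eq_mnm_w0 mulr1.
by case: (_ == m); case: (_ == 0%N); rewrite ?mulr1 ?mulr0.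
Qed.

Lemma mnm_w0D_Uu m : mnm_w0 (m + U_(ix))%MM = (mnm_w0 m + U_(iu))%MM.
Proof. by apply/mnmP => -[[|[|[|i]]] Hi]; rewrite !mnmE //= ?addn0 ?addn1. Qed.

Lemma mnm_w0D_Uv m : mnm_w0 (m + U_(iy))%MM = (mnm_w0 m + U_(iv))%MM.
Proof. by apply/mnmP => -[[|[|[|i]]] Hi]; rewrite !mnmE //= ?addn0 ?addn1. Qed.

Lemma at_w0_mderiv_u P : at_w0 (mderiv iu P) = mderiv ix (at_w0 P).
Proof.
by apply/mpolyP => m; rewrite mcoeff_at_w0 !mcoeff_deriv mcoeff_at_w0 mnm_w0D_Uu mnmE.
Qed.

Lemma at_w0_mderiv_v P : at_w0 (mderiv iv P) = mderiv iy (at_w0 P).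
Proof.
by apply/mpolyP => m; rewrite mcoeff_at_w0 !mcoeff_deriv mcoeff_at_w0 mnm_w0D_Uv mnmE.
Qed.

Lemma at_w0_homogenize d h :
  at_w0 (homogenize d h) = \sum_(m <- msupp h | (d <= mdeg m)%N) h@_m *: 'X_[m].
Proof.
rewrite /homogenize /at_w0 rmorph_sum [RHS]big_mkcond /=; apply: eq_bigr => m _.
rewrite comp_mpolyZ !rmorphM !rmorphXn /= !comp_mpolyXU [_`_iu]/= [_`_iv]/= [_`_iw]/=.
by rewrite (mpolyX2 m) expr0n subn_eq0; case: leqP; rewrite ?mulr1 ?mulr0 ?scaler0.
Qed.

Lemma at_w0_bigF f : at_w0 (bigF f) = hpart (tdeg f) f.
Proof.
rewrite /bigF at_w0_homogenize /hpart [LHS]big_seq_cond [RHS]big_seq_cond.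
apply: eq_bigl => m.
case: (boolP (m \in msupp f)) => //= /msize_mdeg_lt; rewrite /tdeg eq_sym eqn_leq.
by case: (msize f) => //= k; rewrite ltnS => ->; rewrite andbT.
Qed.

Lemma meval_pt u v h :
  h.@[pt u v] = \sum_(m <- msupp h) h@_m * (u ^+ m ix * v ^+ m iy).
Proof. by rewrite mevalE; apply: eq_bigr => m _; rewrite big_ord2_xy. Qed.

Lemma meval_pt_dx u v h : (mderiv ix h).@[pt u v] =
  \sum_(m <- msupp h) h@_m * ((m ix)%:R * u ^+ (m ix).-1 * v ^+ m iy).
Proof.
rewrite /mderiv rmorph_sum /=; apply: eq_bigr => m _.
by rewrite mevalZ meval_ptX !mnmBE !mnm1E /= subn1 subn0; ring.
Qed.

Lemma meval_pt_dy u v h : (mderiv iy h).@[pt u v] =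
  \sum_(m <- msupp h) h@_m * ((m iy)%:R * u ^+ m ix * v ^+ (m iy).-1).
Proof.
rewrite /mderiv rmorph_sum /=; apply: eq_bigr => m _.
by rewrite mevalZ meval_ptX !mnmBE !mnm1E /= subn1 subn0; ring.
Qed.

Lemma euler_meval d h u v : h \is d.-homog ->
  u * (mderiv ix h).@[pt u v] + v * (mderiv iy h).@[pt u v] = d%:R * h.@[pt u v].
Proof.
move/dhomogP => hd; rewrite meval_pt_dx meval_pt_dy meval_pt !mulr_sumr -big_split /=.
rewrite big_seq [RHS]big_seq; apply: eq_bigr => m /hd mdm.
have <- : (m ix + m iy)%N = d by rewrite -mdeg2; exact: mdm.
by rewrite natrD; case: (m ix) => [|a]; case: (m iy) => [|b] /=; rewrite ?exprS; ring.
Qed.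

Lemma mcoeff_hpart d h m : (hpart d h)@_m = h@_m * (mdeg m == d)%:R.
Proof. exact: mcoeff_sum_msupp_cond. Qed.

Lemma hessian_homog d h : h \is d.-homog -> hessian h \is (d.-2 + d.-2).-homog.
Proof.
move=> hd; have h2 i j : mderiv i (mderiv j h) \is d.-2.-homog.
  by do 2 apply: mderiv_homog.
by rewrite /hessian expr2; apply: rpredB; apply: dhomogM.
Qed.

Lemma msize_hessianD h r k : (msize h <= k.+1)%N -> (msize r <= k)%N ->
  (msize (hessian (h + r) - hessian h) <= 2 * k - 4)%N.
Proof.
move=> hk rk; rewrite /hessian !mderivD.
set A := mderiv ix (mderiv ix h); set a := mderiv ix (mderiv ix r).
set B := mderiv ix (mderiv iy h); set b := mderiv ix (mderiv iy r).
set C := mderiv iy (mderiv iy h); set c := mderiv iy (mderiv iy r).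
have -> : (A + a) * (C + c) - (B + b) ^+ 2 - (A * C - B ^+ 2) =
  A * c + a * C + a * c - B * b - B * b - b * b by ring.
have [sA sB sC] : [/\ msize A <= k.-1, msize B <= k.-1 & msize C <= k.-1]%N.
  by split; exact: (msize_mderiv2 _ _ hk).
have [sa sb sc] : [/\ msize a <= k.-2, msize b <= k.-2 & msize c <= k.-2]%N.
  by split; exact: msize_mderiv2.
have k1 : (k.-1 + k.-2 <= (2 * k - 4).+1)%N by rewrite -!subn1; lia.
have k2 : (k.-2 + k.-1 <= (2 * k - 4).+1)%N by rewrite -!subn1; lia.
have k3 : (k.-2 + k.-2 <= (2 * k - 4).+1)%N by rewrite -!subn1; lia.
by repeat apply: msizeD_leq; rewrite ?mmeasureN;
  [exact: (msizeM_leq sA sc k1) | exact: (msizeM_leq sa sC k2)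
  | exact: (msizeM_leq sa sc k3) | exact: (msizeM_leq sB sb k1)
  | exact: (msizeM_leq sB sb k1) | exact: (msizeM_leq sb sb k3)].
Qed.

Lemma hpart_homog d h : hpart d h \is d.-homog.
Proof. exact: pihomogP. Qed.

Lemma msize_hpart d h : (msize (hpart d h) <= d.+1)%N.
Proof.
apply: msize_leq_mcoeff => m; rewrite mcoeff_hpart.
by case: (mdeg m =P d) => [->//|_]; rewrite mulr0 eqxx.
Qed.

Lemma msize_tdeg f : (msize f <= (tdeg f).+1)%N.
Proof. by rewrite /tdeg; case: (msize f). Qed.

Lemma msize_sub_hpart f : (msize (f - hpart (tdeg f) f) <= tdeg f)%N.
Proof.
apply: msize_leq_mcoeff => m; rewrite mcoeffB mcoeff_hpart.
case: (ltngtP (mdeg m) (tdeg f)) => [//|lt|_]; last by rewrite ?eqxx mulr1 subrr eqxx.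
by rewrite mcoeff_eq0_msize ?mul0r ?subrr ?eqxx // (leq_trans (msize_tdeg f)).
Qed.

Lemma at_w0_Hf f : (2 <= tdeg f)%N -> at_w0 (Hf f) = hessian (hpart (tdeg f) f).
Proof.
move=> n2; set n := tdeg f; set g := hpart n f.
have hHg : hessian g \is (2 * n - 4)%N.-homog.
  rewrite (_ : (2 * n - 4 = n.-2 + n.-2)%N); last by rewrite -!subn1; lia.
  exact/hessian_homog/hpart_homog.
have lowE : (msize (hessian f - hessian g) <= 2 * n - 4)%N.
  have fE : f = g + (f - g) by rewrite addrC subrK.
  rewrite {1}fE; apply: msize_hessianD; first exact: msize_hpart.
  exact: msize_sub_hpart.
apply/mpolyP => m; rewrite /Hf at_w0_homogenize mcoeff_sum_msupp_cond -/n.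
rewrite -(subrK (hessian g) (hessian f)) mcoeffD; case: leqP => hm.
  by rewrite mcoeff_eq0_msize ?add0r ?mulr1 // (leq_trans lowE hm).
by rewrite mulr0 (dhomog_nemf_coeff hHg) // neq_ltn hm.
Qed.

Definition radial_d2 h u v : R :=
  u ^+ 2 * (mderiv ix (mderiv ix h)).@[pt u v]
  + 2%:R * (u * v * (mderiv ix (mderiv iy h)).@[pt u v])
  + v ^+ 2 * (mderiv iy (mderiv iy h)).@[pt u v].

Lemma Q_ww_equator f u v : Q_ww f u v 0 = radial_d2 (hpart (tdeg f) f) u v.
Proof.
have gxx : ev3 (Fuu f) u v 0 = (mderiv ix (mderiv ix (hpart (tdeg f) f))).@[pt u v].
  by rewrite meval_at_w0 /Fuu !at_w0_mderiv_u at_w0_bigF.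
have gxy : ev3 (Fuv f) u v 0 = (mderiv ix (mderiv iy (hpart (tdeg f) f))).@[pt u v].
  by rewrite meval_at_w0 /Fuv at_w0_mderiv_u at_w0_mderiv_v at_w0_bigF.
have gyy : ev3 (Fvv f) u v 0 = (mderiv iy (mderiv iy (hpart (tdeg f) f))).@[pt u v].
  by rewrite meval_at_w0 /Fvv !at_w0_mderiv_v at_w0_bigF.
move: gxx gxy gyy; rewrite /Q_ww /polS /ev3 !rmorphD !rmorphM /= mevalZ !rmorphM /=.
by rewrite !mevalXU /= => -> -> ->; rewrite /radial_d2; ring.
Qed.

Section HomogeneousAtAPoint.
Variables (d : nat) (h : {mpoly R[2]}) (u v : R).
Hypothesis hd : h \is d.-homog.

Let gx := (mderiv ix h).@[pt u v].
Let gy := (mderiv iy h).@[pt u v].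
Let gxx := (mderiv ix (mderiv ix h)).@[pt u v].
Let gxy := (mderiv ix (mderiv iy h)).@[pt u v].
Let gyy := (mderiv iy (mderiv iy h)).@[pt u v].

Let euler_x : u * gxx + v * gxy = d.-1%:R * gx.
Proof. by rewrite -euler_meval ?(mderiv_comm ix iy) //; exact: mderiv_homog. Qed.

Let euler_y : u * gxy + v * gyy = d.-1%:R * gy.
Proof. by rewrite -euler_meval //; exact: mderiv_homog. Qed.

Lemma radial_d2_homog : radial_d2 h u v = (d * d.-1)%:R * h.@[pt u v].
Proof.
transitivity (u * (u * gxx + v * gxy) + v * (u * gxy + v * gyy)).
  by rewrite /radial_d2; ring.
rewrite euler_x euler_y.
transitivity (d.-1%:R * (u * gx + v * gy)); first by ring.
by rewrite /gx /gy (euler_meval u v hd) natrM; ring.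
Qed.

Lemma hessian_meval_homog :
  (hessian h).@[pt u v] * (u ^+ 2 + v ^+ 2) ^+ 2 =
  radial_d2 h u v * (v ^+ 2 * gxx - 2%:R * (u * v * gxy) + u ^+ 2 * gyy)
  - (d.-1%:R * (u * gy - v * gx)) ^+ 2.
Proof.
have -> : d.-1%:R * (u * gy - v * gx) = u * (d.-1%:R * gy) - v * (d.-1%:R * gx) by ring.
rewrite -euler_x -euler_y /hessian rmorphB rmorphM rmorphXn /radial_d2.
by rewrite -/gxx -/gxy -/gyy; ring.
Qed.

End HomogeneousAtAPoint.

Section DoubleLineFactor.
Variables (u v : R).
Hypothesis uv : u ^+ 2 + v ^+ 2 = 1.

(* Rotated coordinates in which l vanishes on the line through (u, v):
   x = u s + v l and y = v s - u l. *)
Let s : {mpoly R[2]} := u%:MP * 'X_ix + v%:MP * 'X_iy.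
Let l : {mpoly R[2]} := v%:MP * 'X_ix - u%:MP * 'X_iy.

Lemma msize_line : (1 < msize l)%N.
Proof.
rewrite ltnNge; apply/negP => /msize1_polyC lE.
have ev a b : v * a - u * b = l@_0 by have := congr1 (meval (pt a b)) lE;
  rewrite mevalC !(mevalB, mevalM, mevalC, mevalXU).
have [u0 v0] : u = 0 /\ v = 0.
  by have := ev 1 0; have := ev 0 1; have := ev 0 0; split; lra.
by move: uv; rewrite u0 v0 expr0n addr0 => /eqP; rewrite eq_sym oner_eq0.
Qed.

Lemma homog_eqmod_sq_line d h : h \is d.-homog -> (0 < d)%N ->
  eqmod_sq l h ((h.@[pt u v])%:MP * s ^+ d
    + (v * (mderiv ix h).@[pt u v] - u * (mderiv iy h).@[pt u v])%:MP * s ^+ d.-1 * l).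
Proof.
move=> /dhomogP hd d0.
have uv' : u%:MP ^+ 2 + v%:MP ^+ 2 = 1 :> {mpoly R[2]}.
  by rewrite -!rmorphXn -rmorphD uv rmorph1.
have eX : 'X_ix = u%:MP * s + v%:MP * l.
  by rewrite -[LHS]mul1r -uv' /s /l; ring.
have eY : 'X_iy = v%:MP * s - u%:MP * l.
  by rewrite -[LHS]mul1r -uv' /s /l; ring.
rewrite {1}[h]mpolyE meval_pt meval_pt_dx meval_pt_dy !mulr_sumr -sumrB.
rewrite !rmorph_sum !mulr_suml -big_split /= !big_seq; apply: eqmod_sq_sum => m mh.
have mdm : (m ix + m iy)%N = d by rewrite -mdeg2; exact: hd.
rewrite -mul_mpolyC mpolyX2 eX eY.
have ab : (0 < m ix + m iy)%N by rewrite mdm.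
apply: eqmod_sq_trans (eqmod_sqM (eqmod_sq_refl l (h@_m)%:MP)
  (eqmod_sq_monomial l u%:MP v%:MP s ab)) _.
rewrite mdm !rmorphB !rmorphM !rmorphXn !rmorph_nat.
by exists 0; rewrite !exprS; ring.
Qed.

End DoubleLineFactor.

Lemma tangent_deriv_neq0 d h u v : h \is d.-homog -> (0 < d)%N ->
  u ^+ 2 + v ^+ 2 = 1 -> no_repeated_factors h -> h.@[pt u v] = 0 ->
  u * (mderiv iy h).@[pt u v] - v * (mderiv ix h).@[pt u v] != 0.
Proof.
move=> hd d0 uv sqfree h0; apply/negP => /eqP tang.
have [W hW] := homog_eqmod_sq_line uv hd d0.
have tang' : v * (mderiv ix h).@[pt u v] - u * (mderiv iy h).@[pt u v] = 0.
  by rewrite -opprB tang oppr0.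
move: hW; rewrite h0 tang' !rmorph0 !mul0r !add0r expr2 => /sqfree.
by rewrite leqNgt msize_line.
Qed.

Lemma hessian_lt0_of_radial_d2_eq0 d h u v : h \is d.-homog -> (2 <= d)%N ->
  u ^+ 2 + v ^+ 2 = 1 -> no_repeated_factors h -> radial_d2 h u v = 0 ->
  (hessian h).@[pt u v] < 0.
Proof.
move=> hd d2 uv sqfree rad0.
have d1_neq0 : d.-1%:R != 0 :> R by rewrite pnatr_eq0 -subn1; lia.
have d_neq0 : d%:R != 0 :> R by rewrite pnatr_eq0; lia.
have h0 : h.@[pt u v] = 0.
  move/eqP: rad0; rewrite (radial_d2_homog u v hd) natrM !mulf_eq0.
  by rewrite (negbTE d1_neq0) (negbTE d_neq0) => /eqP.
have := hessian_meval_homog u v hd; rewrite uv expr1n mulr1 rad0 mul0r sub0r => ->.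
rewrite oppr_lt0 lt0r sqr_ge0 andbT sqrf_eq0 mulf_neq0 //.
by apply: tangent_deriv_neq0 hd _ uv sqfree h0; lia.
Qed.

Lemma Qform_equator f u v a b c : Qform f u v 0 a b c = Q_ww f u v 0 * c ^+ 2.
Proof. by rewrite /Qform /Q_uu /Q_uv /Q_vv /Q_uw /Q_vw; ring. Qed.

Lemma flat_equatorE f u v : flat_pt f u v 0 <-> Q_ww f u v 0 = 0.
Proof.
rewrite /flat_pt /Q_uu /Q_uv /Q_vv /Q_uw /Q_vw expr0n !mul0r.
by split=> [[_ [_ [_ [_ [_ ->]]]]] | ->].
Qed.

Lemma singular_equatorE f u v :
  singular_at_infinity f u v 0 <-> on_sphere u v 0 /\ Q_ww f u v 0 = 0.
Proof.
split=> [[[sph sing] _] | [sph Qww0]]; split=> //.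
  by have := sing 0 0 1; rewrite Qform_equator expr1n mulr1; apply; ring.
by split=> // a b c _; rewrite Qform_equator Qww0 mul0r.
Qed.

End Equator.

Unset Implicit Arguments.
Set Strict Implicit.

Theorem theorem3 (R : rcfType) (f : {mpoly R[2]}) :
  (3 <= tdeg f)%N ->
  (forall u v w : R, on_sphere u v w -> w = 0 ->
     (flat_pt f u v w <-> singular_at_infinity f u v w)) /\
  (forall u0 v0 : R, singular_at_infinity f u0 v0 0 ->
     no_repeated_factors (hpart (tdeg f) f) ->
     ev3 (Hf f) u0 v0 0 < 0).
Proof.
move=> n3; split.
  move=> u v w sph w0; subst w.
  split=> [/flat_equatorE Qww0 | /singular_equatorE [_ Qww0]].
    exact/singular_equatorE.
  exact/flat_equatorE.
move=> u v /singular_equatorE [sph Qww0] sqfree.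
have uv : u ^+ 2 + v ^+ 2 = 1 by move: sph; rewrite /on_sphere expr0n addr0.
rewrite meval_at_w0 at_w0_Hf ?(ltnW n3) //.
apply: hessian_lt0_of_radial_d2_eq0 (hpart_homog _ _) (ltnW n3) uv sqfree _.
by rewrite -Q_ww_equator.
Qed.
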